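(* Let $G$ be a finite simple graph of order $n$ without isolated vertices, with minimum degree $\delta$ and maximum degree $\Delta$. Let $f$ be a minimum STDF of $G$ (i.e. an STDF with $f(V(G))=\gamma_{st}(G)$), and let $V_+=\{v: f(v)=1\}$, $V_-=\{v:f(v)=-1\}$, $E_+=|E(G[V_+])|$, $E_-=|E(G[V_-])|$, let $[V_+,V_-]$ be the set of edges with one end in $V_+$ and the other in $V_-$, and let $V_e$ be the set of vertices of even degree. Then (a) $\left(\lfloor\frac{\delta}{2}\rfloor+1\right)|V_-|\leq |[V_+,V_-]|\leq\left(\lceil\frac{\Delta}{2}\rceil-1\right)|V_+|$; (b) $n+|V_-|+4E_-+|V_e|\leq 2E_++|[V_+,V_-]|$.
   Context: For a vertex $v$, $N(v)$ is its open neighborhood. A signed total dominating function (STDF) of $G$ is a function $f:V(G)\to\{-1,1\}$ such that $\sum_{u\in N(v)}f(u)\geq 1$ for every vertex $v$; the signed total domination number $\gamma_{st}(G)$ is the minimum of $\sum_{v\in V(G)}f(v)$ over all STDFs $f$ of $G$. $G[X]$ denotes the subgraph induced by $X$. *)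

From HB Require Import structures.
From mathcomp Require Import all_boot all_order all_algebra.
Set Implicit Arguments. Unset Strict Implicit. Unset Printing Implicit Defensive.
Import Order.TTheory GRing.Theory Num.Theory.

Definition simple_graph (T : finType) (e : rel T) : Prop :=
  symmetric e /\ irreflexive e.

Definition nbhd (T : finType) (e : rel T) (v : T) : {set T} := [set u | e v u].

Definition deg (T : finType) (e : rel T) (v : T) : nat := #|nbhd e v|.

(* minimum and maximum degree (default #|T| resp. 0 on the empty vertex set) *)
Definition mindeg (T : finType) (e : rel T) : nat :=
  \big[minn/#|T|]_(v : T) deg e v.
Definition maxdeg (T : finType) (e : rel T) : nat := \max_(v : T) deg e v.

Definition no_isolated (T : finType) (e : rel T) : Prop := forall v, 0 < deg e v.

Definition edges (T : finType) (e : rel T) : {set {set T}} :=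
  [set s : {set T} | [exists u, exists v, e u v && (s == [set u; v])]].

Definition induced_edges (T : finType) (e : rel T) (X : {set T}) : {set {set T}} :=
  [set s in edges e | s \subset X].

Definition cross_edges (T : finType) (e : rel T) (X Y : {set T}) : {set {set T}} :=
  [set s in edges e | [exists u, exists v, [&& u \in X, v \in Y & s == [set u; v]]]].

Definition is_STDF (T : finType) (e : rel T) (f : T -> int) : Prop :=
  (forall v, f v = 1%R \/ f v = (-1)%R) /\
  (forall v, (1 <= \sum_(u in nbhd e v) f u)%R).

Definition weight (T : finType) (f : T -> int) : int := (\sum_(v : T) f v)%R.

Definition is_min_STDF (T : finType) (e : rel T) (f : T -> int) : Prop :=
  is_STDF e f /\ forall g, is_STDF e g -> (weight f <= weight g)%R.

Definition Vplus (T : finType) (f : T -> int) : {set T} := [set v | f v == 1%R].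
Definition Vminus (T : finType) (f : T -> int) : {set T} := [set v | f v == (-1)%R].
Definition Veven (T : finType) (e : rel T) : {set T} := [set v | ~~ odd (deg e v)].

From HB Require Import structures.
From mathcomp Require Import all_boot all_order all_algebra.
From mathcomp Require Import zify.
Set Implicit Arguments. Unset Strict Implicit. Unset Printing Implicit Defensive.
Import Order.TTheory GRing.Theory Num.Theory.

(* Every vertex v of an STDF has more neighbours in V+ than in V-, and since
   |N(v) ∩ V+| + |N(v) ∩ V-| = deg v, the excess is at least 2 when deg v is
   even.  Both parts follow by summing these local inequalities over V+ and
   V- and counting the edges of G[V+], G[V-] and [V+,V-] through ordered
   pairs of adjacent vertices. *)

Lemma mindeg_le (T : finType) (e : rel T) v : mindeg e <= deg e v.
Proof. exact: (bigmin_le (T := nat)). Qed.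

Lemma maxdeg_ge (T : finType) (e : rel T) v : deg e v <= maxdeg e.
Proof. exact: (leq_bigmax (F := deg e)). Qed.

Lemma set2_eq_cases (T : finType) (u v a b : T) : [set u; v] = [set a; b] ->
  (u = a /\ v = b) \/ (u = b /\ v = a).
Proof.
move=> uv_ab.
have : u \in [set a; b] by rewrite -uv_ab !inE eqxx.
have : v \in [set a; b] by rewrite -uv_ab !inE eqxx orbT.
have : a \in [set u; v] by rewrite uv_ab !inE eqxx.
have : b \in [set u; v] by rewrite uv_ab !inE eqxx orbT.
by rewrite !inE => /orP[]/eqP ? /orP[]/eqP ? /orP[]/eqP ? /orP[]/eqP ?; subst; tauto.
Qed.

Section Arcs.
Variables (T : finType) (e : rel T).
Hypotheses (e_sym : symmetric e) (e_irr : irreflexive e).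

Definition arcs (X Y : {set T}) : {set T * T} :=
  [set p | [&& e p.1 p.2, p.1 \in X & p.2 \in Y]].

Definition arc_edge (p : T * T) : {set T} := [set p.1; p.2].

Lemma card_arcs X Y : #|arcs X Y| = \sum_(x in X) #|nbhd e x :&: Y|.
Proof.
rewrite -sum1_card (eq_bigl [pred p | (p.1 \in X) && (p.2 \in nbhd e p.1 :&: Y)]).
  rewrite -(pair_big_dep (mem X) (fun x y => y \in nbhd e x :&: Y) (fun _ _ => 1)) /=.
  by apply: eq_bigr => x _; rewrite sum1_card.
by move=> [x y]; rewrite !inE /= andbCA andbA.
Qed.

Lemma card_arcsC X Y : #|arcs X Y| = #|arcs Y X|.
Proof.
have swapK : involutive (fun p : T * T => (p.2, p.1)) by move=> [].
rewrite -(card_imset _ (inv_inj swapK)); apply: eq_card => -[x y].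
rewrite -[(x, y)]swapK (mem_imset _ _ (inv_inj swapK)) !inE /=.
by rewrite e_sym [(y \in X) && _]andbC.
Qed.

Lemma arc_edge_fiber X Y a b :
  [set p in arcs X Y | arc_edge p == [set a; b]] = [set (a, b); (b, a)] :&: arcs X Y.
Proof.
apply/setP => -[x y]; rewrite !inE /arc_edge /= -!pair_eqE /= [RHS]andbC.
congr (_ && _); apply/eqP/idP => [/set2_eq_cases[][-> ->]|]; rewrite ?eqxx ?orbT //.
by case/orP => /andP[/eqP-> /eqP->]; rewrite // setUC.
Qed.

Lemma card_arcs_partition X Y (P : {set {set T}}) :
  {in arcs X Y, forall p, arc_edge p \in P} ->
  #|arcs X Y| = \sum_(s in P) #|[set p in arcs X Y | arc_edge p == s]|.
Proof.
move=> arcsP; rewrite -sum1_card (partition_big arc_edge (mem P)) //=.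
by apply: eq_bigr => s _; rewrite -sum1_card; apply: eq_bigl => p; rewrite !inE.
Qed.

Lemma set2_edges u v : ([set u; v] \in edges e) = e u v.
Proof.
rewrite inE; apply/existsP/idP => [[a /existsP[b /andP[eab /eqP/set2_eq_cases]]]|euv].
  by case=> -[-> ->]; rewrite // e_sym.
by exists u; apply/existsP; exists v; rewrite euv eqxx.
Qed.

Lemma card_induced_edges X : 2 * #|induced_edges e X| = #|arcs X X|.
Proof.
rewrite (@card_arcs_partition _ _ (induced_edges e X)); last first.
  move=> -[x y]; rewrite inE /arc_edge /= => /and3P[exy xX yX].
  by rewrite inE set2_edges exy subUset !sub1set xX yX.
rewrite mulnC -sum_nat_const; apply: eq_bigr => s.
rewrite !inE => /andP[/existsP[a /existsP[b /andP[eab /eqP->]]]].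
rewrite subUset !sub1set => /andP[aX bX].
have ab : a != b by apply: contraTneq eab => ->; rewrite e_irr.
rewrite arc_edge_fiber (setIidPl _) ?cards2 -?pair_eqE /= ?(negbTE ab) //.
by rewrite subUset !sub1set !inE /= eab e_sym eab aX bX.
Qed.

Lemma card_cross_edges (X Y : {set T}) :
  [disjoint X & Y] -> #|cross_edges e X Y| = #|arcs X Y|.
Proof.
move=> dXY; rewrite (@card_arcs_partition _ _ (cross_edges e X Y)); last first.
  move=> -[x y]; rewrite inE /arc_edge /= => /and3P[exy xX yX].
  rewrite inE set2_edges exy; apply/existsP; exists x; apply/existsP; exists y.
  by rewrite xX yX eqxx.
rewrite -sum1_card; apply: eq_bigr => s.
rewrite inE => /andP[s_edge /existsP[u /existsP[v /and3P[uX vY /eqP s_uv]]]].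
have euv : e u v by rewrite -set2_edges -s_uv.
rewrite s_uv arc_edge_fiber -(cards1 (u, v)); apply: eq_card => p.
rewrite !inE; case: eqP => [->|_] /=; first by rewrite euv uX vY.
by case: eqP => // ->; rewrite /= (disjointFl dXY vY) andbF.
Qed.

End Arcs.

Lemma larger_part_gt_half m p d : m < p -> d <= p + m -> d./2 + 1 <= p.
Proof. by move: (odd_double_half d); case: (odd d) => /=; lia. Qed.

Lemma smaller_part_lt_uphalf m p d : m < p -> p + m <= d -> m <= uphalf d - 1.
Proof. by rewrite uphalf_half; move: (odd_double_half d); case: (odd d) => /=; lia. Qed.

Section STDF.
Variables (T : finType) (e : rel T) (f : T -> int).
Hypothesis f_STDF : is_STDF e f.

Definition plus_deg v := #|nbhd e v :&: Vplus f|.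
Definition minus_deg v := #|nbhd e v :&: Vminus f|.

Lemma Vminus_setC : Vminus f = ~: Vplus f.
Proof. by apply/setP => v; rewrite !inE; case: (f_STDF.1 v) => ->. Qed.

Lemma deg_split v : deg e v = plus_deg v + minus_deg v.
Proof. by rewrite /minus_deg Vminus_setC -setDE cardsID. Qed.

Lemma sum_nbhd_STDF v :
  (\sum_(u in nbhd e v) f u = (plus_deg v)%:Z - (minus_deg v)%:Z)%R.
Proof.
rewrite (big_setID (Vplus f)) /= /minus_deg Vminus_setC -setDE.
rewrite (eq_bigr (fun=> 1%R)) => [|u]; last by rewrite !inE => /andP[_ /eqP].
rewrite [X in (_ + X)%R](eq_bigr (fun=> (-1)%R)) => [|u]; last first.
  by rewrite !inE => /andP[/eqP fu _]; case: (f_STDF.1 u).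
by rewrite !sumr_const mulNrn -!natz.
Qed.

Lemma minus_deg_lt v : minus_deg v < plus_deg v.
Proof. by move: (f_STDF.2 v); rewrite sum_nbhd_STDF; lia. Qed.

(* [plus_deg v - minus_deg v] has the parity of [deg v], so it is at least 2
   when [deg v] is even. *)
Lemma minus_deg_even v : minus_deg v + 1 + (v \in Veven e) <= plus_deg v.
Proof.
rewrite inE deg_split; have := minus_deg_lt v.
case: (boolP (odd _)) => /= [_|]; first by rewrite addn0 addn1.
move=> even_deg lt_mp; suff : plus_deg v != (minus_deg v).+1 by lia.
by apply: contraNneq even_deg => ->; rewrite addSn addnn /= odd_double.
Qed.

Lemma sum_minus_deg_even (X : {set T}) :
  \sum_(x in X) minus_deg x + #|X| + #|X :&: Veven e| <= \sum_(x in X) plus_deg x.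
Proof.
have evenE : #|X :&: Veven e| = \sum_(x in X) (x \in Veven e).
  rewrite (big_setID (Veven e)) /= [X in _ + X]big1 => [|x]; last first.
    by rewrite !inE => /andP[/negbTE->].
  by rewrite addn0 -sum1_card; apply: eq_bigr => x; rewrite inE => /andP[_ ->].
rewrite evenE -sum1_card -!big_split /=.
by apply: leq_sum => x _; apply: minus_deg_even.
Qed.

End STDF.

Theorem lemma3p1 (T : finType) (e : rel T) (f : T -> int) :
  simple_graph e -> no_isolated e -> is_min_STDF e f ->
  let delta := mindeg e in
  let Delta := maxdeg e in
  let Vp := Vplus f in
  let Vm := Vminus f in
  let Ep := #|induced_edges e Vp| in
  let Em := #|induced_edges e Vm| in
  let C := #|cross_edges e Vp Vm| in
  (* (a) *)
  ((delta./2 + 1) * #|Vm| <= C /\ C <= ((uphalf Delta) - 1) * #|Vp|)%N /\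
  (* (b) *)
  (#|T| + #|Vm| + 4 * Em + #|Veven e| <= 2 * Ep + C)%N.
Proof.
move=> [e_sym e_irr] _ [f_STDF _] delta Delta Vp Vm Ep Em C.
have Vm_setC : Vm = ~: Vp := Vminus_setC f_STDF.
have disj : [disjoint Vp & Vm] by rewrite Vm_setC -subsets_disjoint.
have C_plus : C = \sum_(x in Vp) minus_deg e f x.
  by rewrite /C card_cross_edges // card_arcs.
have C_minus : C = \sum_(x in Vm) plus_deg e f x.
  by rewrite /C card_cross_edges // card_arcsC // card_arcs.
have Ep2 : 2 * Ep = \sum_(x in Vp) plus_deg e f x.
  by rewrite /Ep card_induced_edges // card_arcs.
have Em2 : 2 * Em = \sum_(x in Vm) minus_deg e f x.
  by rewrite /Em card_induced_edges // card_arcs.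
split; [split|].
- rewrite C_minus mulnC -sum_nat_const; apply: leq_sum => x _.
  by apply: (larger_part_gt_half (minus_deg_lt f_STDF x)); rewrite -deg_split // mindeg_le.
- rewrite C_plus mulnC -sum_nat_const; apply: leq_sum => x _.
  by apply: (smaller_part_lt_uphalf (minus_deg_lt f_STDF x)); rewrite -deg_split // maxdeg_ge.
- have := sum_minus_deg_even f_STDF Vp; have := sum_minus_deg_even f_STDF Vm.
  rewrite -C_plus -C_minus -Ep2 -Em2.
  have : #|T| = #|Vp| + #|Vm| by rewrite Vm_setC cardsC.
  have : #|Veven e| = #|Vp :&: Veven e| + #|Vm :&: Veven e|.
    by rewrite -(cardsID Vp (Veven e)) setDE Vm_setC !(setIC (Veven e)).
  lia.
Qed.
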